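(* Let $\mathcal{P}=\{X_i\mid i\in I\}$ be a partition of a set $X$. Then the quotient semigroup $\Sigma(X,\mathcal{P})/\chi$ is isomorphic to the semigroup of all surjective maps $I\to I$ (under composition).
   Context: Maps are written on the right and composed left to right ($x(fg)=(xf)g$). $T(X,\mathcal{P})=\{f\colon X\to X\mid \forall i\ \exists j:\ X_if\subseteq X_j\}$ (distinct indices for distinct blocks) and $\Sigma(X,\mathcal{P})=\{f\in T(X,\mathcal{P})\mid Xf\cap X_i\neq\emptyset\ \forall i\in I\}$, a subsemigroup. For $f\in T(X,\mathcal{P})$, $\chi^{(f)}\colon I\to I$ is defined by $i\chi^{(f)}=j$ whenever $X_if\subseteq X_j$. The relation $\chi$ on $\Sigma(X,\mathcal{P})$ defined by $(f,g)\in\chi\iff\chi^{(f)}=\chi^{(g)}$ is a congruence, and $\Sigma(X,\mathcal{P})/\chi$ is the corresponding quotient semigroup with $[f][g]=[fg]$. *)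

Set Implicit Arguments.

(* A partition P = {X_i | i in I} of a set X is encoded by the map
   [block : X -> I] sending x to the index i of the block X_i containing x,
   i.e. X_i = {x | block x = i}.  Blocks of a partition are nonempty, which
   is the hypothesis [forall i, exists x, block x = i] in the theorem.
   Distinct indices give distinct (indeed disjoint) blocks automatically. *)

Section Defs.
Variables (X I : Type) (block : X -> I).

(* Maps are written on the right: x(fg) = (xf)g, so the semigroup product
   fg of f, g : X -> X is the Rocq function  fun x => g (f x). *)
Definition rcomp {A : Type} (f g : A -> A) : A -> A := fun x => g (f x).

Definition maps_block_into (f : X -> X) (i j : I) : Prop :=
  forall x, block x = i -> block (f x) = j.

Definition in_T (f : X -> X) : Prop := forall i, exists j, maps_block_into f i j.

Definition in_Sigma (f : X -> X) : Prop :=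
  in_T f /\ forall i, exists x, block (f x) = i.

(* (f,g) in chi  iff  chi^(f) = chi^(g); the graph of chi^(f) is
   {(i,j) | X_i f ⊆ X_j} (a function I -> I since blocks are nonempty). *)
Definition chi (f g : X -> X) : Prop :=
  forall i j, maps_block_into f i j <-> maps_block_into g i j.

Definition chi_class (f : X -> X) : (X -> X) -> Prop :=
  fun g => in_Sigma g /\ chi f g.

(* Elements of the quotient semigroup Sigma(X,P)/chi are the chi-classes. *)
Definition is_class (C : (X -> X) -> Prop) : Prop :=
  exists f, in_Sigma f /\ C = chi_class f.

(* Product in the quotient: [f][g] = [fg]. Defined representative-free as the
   chi-class of a product of representatives. *)
Definition mulQ (C D : (X -> X) -> Prop) : (X -> X) -> Prop :=
  fun h => in_Sigma h /\
    exists f g, C f /\ D g /\ chi (rcomp f g) h.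

End Defs.

Definition surj {A B : Type} (s : A -> B) : Prop := forall b, exists a, s a = b.

(* Each f in Sigma(X,P) induces the surjection chi^(f) : I -> I, block x |-> block (f x),
   and chi identifies exactly the maps inducing the same surjection.  Induced maps compose
   like the maps themselves, and a surjection s lifts to the map sending x to some point of
   the block X_(s (block x)), which lies in Sigma(X,P) because s is onto. *)
From Stdlib Require Import ClassicalEpsilon FunctionalExtensionality PropExtensionality.

Set Implicit Arguments.

Section Quotient.
Variables (X I : Type) (block : X -> I).

Lemma in_T_respects_block f x y :
  in_T block f -> block x = block y -> block (f x) = block (f y).
Proof.
  intros Tf Exy. destruct (Tf (block x)) as [j Hj].
  rewrite (Hj x eq_refl). symmetry. apply Hj. now symmetry.
Qed.

Lemma maps_block_into_iff f x j :
  in_T block f -> maps_block_into block f (block x) j <-> block (f x) = j.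
Proof.
  intros Tf; split.
  - intros Hj. now apply Hj.
  - intros <- y Hy. now apply in_T_respects_block.
Qed.

Lemma chi_iff_same_blocks f g : in_T block f -> in_T block g ->
  chi block f g <-> forall x, block (f x) = block (g x).
Proof.
  intros Tf Tg; split.
  - intros Hfg x. symmetry. apply (proj1 (maps_block_into_iff x _ Tg)), (proj1 (Hfg _ _)).
    now apply maps_block_into_iff.
  - intros Hfg i j; split; intros Hj y Hy.
    + rewrite <- Hfg. now apply Hj.
    + rewrite Hfg. now apply Hj.
Qed.

Lemma chi_refl f : chi block f f.
Proof. intros i j; tauto. Qed.

Lemma chi_class_eq f g : chi block f g -> chi_class block f = chi_class block g.
Proof.
  intros Hfg. apply functional_extensionality; intros h.
  apply propositional_extensionality. unfold chi_class, chi in *.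
  split; intros [Sh Hh]; split; try exact Sh; intros i j;
    rewrite <- Hh; [symmetry|]; apply Hfg.
Qed.

Lemma in_T_rcomp f g : in_T block f -> in_T block g -> in_T block (rcomp f g).
Proof.
  intros Tf Tg i. destruct (Tf i) as [j Hj]. destruct (Tg j) as [k Hk].
  exists k. intros x Hx. apply Hk, Hj, Hx.
Qed.

Lemma in_Sigma_rcomp f g :
  in_Sigma block f -> in_Sigma block g -> in_Sigma block (rcomp f g).
Proof.
  intros [Tf Sf] [Tg Sg]. split; [now apply in_T_rcomp|].
  intros i. destruct (Sg i) as [y <-]. destruct (Sf (block y)) as [x Hx].
  exists x. unfold rcomp. now apply in_T_respects_block.
Qed.

Lemma chi_rcomp f f' g g' :
  in_T block f -> in_T block f' -> in_T block g -> in_T block g' ->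
  chi block f f' -> chi block g g' -> chi block (rcomp f g) (rcomp f' g').
Proof.
  intros Tf Tf' Tg Tg' Hf Hg.
  apply chi_iff_same_blocks; try now apply in_T_rcomp.
  intros x. unfold rcomp.
  rewrite (proj1 (chi_iff_same_blocks Tg Tg') Hg).
  apply in_T_respects_block; [exact Tg'|].
  now apply (chi_iff_same_blocks Tf Tf').
Qed.

Lemma mulQ_chi_class f g : in_Sigma block f -> in_Sigma block g ->
  mulQ block (chi_class block f) (chi_class block g) = chi_class block (rcomp f g).
Proof.
  intros Sf Sg. apply functional_extensionality; intros h.
  apply propositional_extensionality. split.
  - intros [Sh [f' [g' [[Sf' Hf] [[Sg' Hg] Hh]]]]]. split; [exact Sh|].
    intros i j. transitivity (maps_block_into block (rcomp f' g') i j); [|apply Hh].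
    apply chi_rcomp; solve [apply Sf | apply Sf' | apply Sg | apply Sg' | assumption].
  - intros [Sh Hh]. split; [exact Sh|].
    exists f, g. split; [split; [exact Sf | apply chi_refl]|].
    split; [split; [exact Sg | apply chi_refl] | exact Hh].
Qed.

(* chi^(f) in the paper; the junk value [i] is only taken when f is not in T(X,P). *)
Definition block_map (f : X -> X) (i : I) : I :=
  epsilon (inhabits i) (fun j => maps_block_into block f i j).

Lemma block_map_block f x : in_T block f -> block_map f (block x) = block (f x).
Proof.
  intros Tf. symmetry. apply (proj1 (maps_block_into_iff x _ Tf)).
  unfold block_map. apply epsilon_spec.
  exists (block (f x)). now apply maps_block_into_iff.
Qed.

Definition class_rep (C : (X -> X) -> Prop) : X -> X :=
  epsilon (inhabits (fun x => x)) C.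

Definition class_map (C : (X -> X) -> Prop) : I -> I := block_map (class_rep C).

Lemma class_rep_spec f : in_Sigma block f -> chi_class block f (class_rep (chi_class block f)).
Proof.
  intros Sf. unfold class_rep. apply epsilon_spec. exists f. split; [exact Sf | apply chi_refl].
Qed.

Lemma class_map_block f x :
  in_Sigma block f -> class_map (chi_class block f) (block x) = block (f x).
Proof.
  intros Sf. destruct (class_rep_spec Sf) as [[Tr _] Hr].
  unfold class_map. rewrite block_map_block by exact Tr.
  symmetry. now apply (chi_iff_same_blocks (proj1 Sf) Tr).
Qed.

Lemma class_map_surj f : in_Sigma block f -> surj (class_map (chi_class block f)).
Proof.
  intros Sf i. destruct (proj2 Sf i) as [x Hx].
  exists (block x). now rewrite class_map_block.
Qed.

Hypothesis blocks_nonempty : forall i : I, exists x : X, block x = i.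

Lemma eq_on_blocks (s t : I -> I) : (forall x, s (block x) = t (block x)) -> s = t.
Proof.
  intros Hst. apply functional_extensionality; intros i.
  destruct (blocks_nonempty i) as [x <-]. apply Hst.
Qed.

Definition lift (s : I -> I) (x : X) : X :=
  epsilon (inhabits x) (fun y => block y = s (block x)).

Lemma block_lift s x : block (lift s x) = s (block x).
Proof. unfold lift. apply epsilon_spec, blocks_nonempty. Qed.

Lemma in_Sigma_lift s : surj s -> in_Sigma block (lift s).
Proof.
  intros Hs. split.
  - intros i. exists (s i). intros x <-. apply block_lift.
  - intros i. destruct (Hs i) as [j <-]. destruct (blocks_nonempty j) as [x <-].
    exists x. apply block_lift.
Qed.

End Quotient.

Theorem lemma3p8 (X I : Type) (block : X -> I)
  (Hpart : forall i : I, exists x : X, block x = i) :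
  exists phi : ((X -> X) -> Prop) -> (I -> I),
    (forall C, is_class block C -> surj (phi C)) /\
    (forall C D, is_class block C -> is_class block D -> phi C = phi D -> C = D) /\
    (forall s : I -> I, surj s -> exists C, is_class block C /\ phi C = s) /\
    (forall C D, is_class block C -> is_class block D ->
       phi (mulQ block C D) = rcomp (phi C) (phi D)).
Proof.
  exists (class_map block). split; [|split; [|split]].
  - intros C [f [Sf ->]]. now apply class_map_surj.
  - intros C D [f [Sf ->]] [g [Sg ->]] E. apply chi_class_eq.
    apply (chi_iff_same_blocks (proj1 Sf) (proj1 Sg)). intros x.
    now rewrite <- (class_map_block x Sf), <- (class_map_block x Sg), E.
  - intros s Hs. pose proof (in_Sigma_lift block Hpart Hs) as Sl.
    exists (chi_class block (lift block s)). split; [now exists (lift block s)|].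
    apply (eq_on_blocks block Hpart). intros x.
    now rewrite (class_map_block x Sl), (block_lift block Hpart).
  - intros C D [f [Sf ->]] [g [Sg ->]].
    rewrite (mulQ_chi_class Sf Sg). apply (eq_on_blocks block Hpart). intros x.
    unfold rcomp at 2.
    now rewrite (class_map_block x (in_Sigma_rcomp Sf Sg)), !class_map_block.
Qed.
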